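(* Let $m\ge 1$, $N=2^m$, let $\mathcal{A}\subseteq[0,N-1]$ with complement $\mathcal{A}^c=[0,N-1]\setminus\mathcal{A}$, and let $\mathbf{P}\in\mathbb{F}_2^{N\times N}$ be upper triangular with all diagonal entries equal to $1$. Then $$\mathcal{C}_{\mathbf{P}\boldsymbol{G}_N}(\mathcal{A})^{\perp}=\mathcal{C}_{(\mathbf{P}^{t})^{-1}\boldsymbol{G}_N\mathbf{Q}_{\pi}\boldsymbol{G}_N}(\mathcal{A}^c).$$
   Context: $[\ell,u]=\{\ell,\ell+1,\dots,u\}$. $\boldsymbol{G}_N=\begin{pmatrix}1&0\\1&1\end{pmatrix}^{\otimes m}$ over $\mathbb{F}_2$, rows and columns indexed by $0,\dots,N-1$. For a matrix $\mathbf{B}\in\mathbb{F}_2^{N\times N}$ and a set $\mathcal{S}\subseteq[0,N-1]$, $\mathcal{C}_{\mathbf{B}}(\mathcal{S})$ denotes the binary linear code spanned by the rows of $\mathbf{B}$ with indices in $\mathcal{S}$. The code $\mathcal{C}_{\mathbf{P}\boldsymbol{G}_N}(\mathcal{A})$ with $\mathbf{P}$ upper triangular with unit diagonal is called an upper polynomial polar code. $\mathbf{Q}_{\pi}$ is the $N\times N$ permutation matrix of the permutation $\pi$ of $[0,N-1]$ swapping $i$ and $N-1-i$ for every $i$. $\perp$ denotes the dual code with respect to the standard inner product $\boldsymbol{v}\cdot\boldsymbol{w}=\sum_i v_iw_i$ over $\mathbb{F}_2$; $\mathbf{P}^t$ is the transpose. *)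

From mathcomp Require Import all_boot all_algebra.
From mathcomp Require Import fingroup perm.
Set Implicit Arguments. Unset Strict Implicit. Unset Printing Implicit Defensive.
Import GRing.Theory.
Local Open Scope ring_scope.

(* Base kernel F = [[1,0],[1,1]] over F_2, indexed by nat in {0,1}. *)
Definition kerF (a b : nat) : 'F_2 := if (b <= a)%N then 1 else 0.

(* Entries of the m-fold Kronecker power F^{(x)m}, first factor outermost:
   (A (x) B)(i,j) = A(i / n, j / n) * B(i mod n, j mod n). *)
Fixpoint Gentry (m : nat) (i j : nat) : 'F_2 :=
  match m with
  | 0 => 1
  | k.+1 => kerF (i %/ 2 ^ k) (j %/ 2 ^ k) * Gentry k (i %% 2 ^ k) (j %% 2 ^ k)
  end.

Definition GN (m : nat) : 'M['F_2]_(2 ^ m) := \matrix_(i, j) Gentry m i j.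

Definition Qpi (n : nat) : 'M['F_2]_n := perm_mx (perm (@rev_ord_inj n)).

Definition code n (B : 'M['F_2]_n) (S : {set 'I_n}) : {set 'rV['F_2]_n} :=
  [set v : 'rV['F_2]_n | (v <= \sum_(i in S) <<row i B>>)%MS].

Definition dual n (C : {set 'rV['F_2]_n}) : {set 'rV['F_2]_n} :=
  [set w : 'rV['F_2]_n | [forall v in C, \sum_i v 0 i * w 0 i == 0]].

Definition upper_unitri n (P : 'M['F_2]_n) : Prop :=
  (forall i j : 'I_n, (j < i)%N -> P i j = 0) /\ (forall i : 'I_n, P i i = 1).

From mathcomp Require Import all_boot all_algebra.
From mathcomp Require Import fingroup perm zify.
Set Implicit Arguments. Unset Strict Implicit. Unset Printing Implicit Defensive.
Import GRing.Theory.
Local Open Scope ring_scope.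

(* Put [B = P G_N] and [M = (P^t)^-1 G_N Q_pi G_N]. If [B M^t = 1], then the
   coordinates of any [w] in the basis formed by the rows of [M] are [w B^t],
   and their [i]-th entry is the inner product of [w] with row [i] of [B]; so
   [w] is orthogonal to the rows of [B] indexed by [A] iff it is a combination
   of the rows of [M] indexed by the complement of [A]. Over [F_2] the block
   decompositions [G_2N = [[G_N, 0], [G_N, G_N]]] and
   [Q_2N = [[0, Q_N], [Q_N, 0]]] show by induction that [G_N] is an involution
   and that [G_N^t = G_N Q_pi G_N]; hence [M^t = G_N P^-1] and [B M^t = 1]. *)

Lemma addrr_F2 (V : lmodType 'F_2) (x : V) : x + x = 0.
Proof.
by rewrite -[x]scale1r -scalerDl (_ : 1 + 1 = 0) ?scale0r //; apply/eqP.
Qed.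

Lemma dot_mulmx_tr n (v w : 'rV['F_2]_n) :
  \sum_i v 0 i * w 0 i = (v *m w^T) 0 0.
Proof. by rewrite mxE; apply: eq_bigr => i _; rewrite mxE. Qed.

Lemma mem_code n (B : 'M['F_2]_n) (S : {set 'I_n}) w :
  reflect (exists2 c : 'rV_n, forall i, i \notin S -> c 0 i = 0 & w = c *m B)
          (w \in code B S).
Proof.
rewrite inE; apply: (iffP (sub_sums_genmxP _ _ _)) => [[u ->] | [c c0 ->]].
  exists (\row_i (if i \in S then u i 0 0 else 0)).
    by move=> i /negbTE iS; rewrite mxE iS.
  rewrite mulmx_sum_row big_mkcond; apply: eq_bigr => i _; rewrite mxE.
  by case: ifP; rewrite ?scale0r // {1}[u i]mx11_scalar mul_scalar_mx.
exists (fun i => (c 0 i)%:M).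
rewrite mulmx_sum_row (bigID (mem S)) /= addrC big1 ?add0r => [|i /c0->].
  by apply: eq_bigr => i _; rewrite mul_scalar_mx.
by rewrite scale0r.
Qed.

Lemma mem_dual_code n (B : 'M['F_2]_n) (S : {set 'I_n}) w :
  (w \in dual (code B S)) = [forall i in S, (w *m B^T) 0 i == 0].
Proof.
have dotE i : (w *m B^T) 0 i = \sum_j (row i B) 0 j * w 0 j.
  by rewrite mxE; apply: eq_bigr => j _; rewrite !mxE mulrC.
rewrite inE; apply/forall_inP/forall_inP => [orth i iS | wS v].
  rewrite dotE; apply: orth; apply/mem_code.
  exists (delta_mx 0 i); last exact: rowE.
  by move=> j jS; rewrite mxE eqxx; case: eqP => // ji; rewrite ji iS in jS.
case/mem_code=> c c0 ->; rewrite dot_mulmx_tr -mulmxA.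
rewrite -[B *m _]trmxK trmx_mul trmxK -dot_mulmx_tr; apply/eqP/big1 => i _.
have [iS|/c0->] := boolP (i \in S); last by rewrite mul0r.
by rewrite (eqP (wS i iS)) mulr0.
Qed.

Section Biorthogonal.

Variables (n : nat) (B M : 'M['F_2]_n).
Hypothesis BMt1 : B *m M^T = 1%:M.

Lemma mem_code_biorth (S : {set 'I_n}) w :
  (w \in code M S) = [forall i in ~: S, (w *m B^T) 0 i == 0].
Proof.
have MBt1 : M *m B^T = 1%:M by rewrite -[M]trmxK -trmx_mul BMt1 trmx1.
have BtM1 : B^T *m M = 1%:M by apply: mulmx1C.
apply/mem_code/forall_inP => [[c c0 ->] i | wS].
  by rewrite -mulmxA MBt1 mulmx1 inE => /c0->.
exists (w *m B^T); last by rewrite -mulmxA BtM1 mulmx1.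
by move=> i iS; apply/eqP/wS; rewrite inE.
Qed.

Lemma dual_code_biorth (S : {set 'I_n}) : dual (code B S) = code M (~: S).
Proof. by apply/setP => w; rewrite mem_dual_code mem_code_biorth setCK. Qed.

End Biorthogonal.

Lemma mulmx_castmx (R : pzSemiRingType) n n' (e : n = n') (A B : 'M[R]_n) :
  castmx (e, e) A *m castmx (e, e) B = castmx (e, e) (A *m B).
Proof. by case: n' / e. Qed.

Lemma castmx_scalar (R : pzSemiRingType) n n' (e : n = n') (a : R) :
  castmx (e, e) a%:M = a%:M.
Proof. by case: n' / e. Qed.

Lemma exp2S_addnn m : (2 ^ m + 2 ^ m = 2 ^ m.+1)%N.
Proof. by rewrite expnS mul2n addnn. Qed.

Local Notation castN m := (castmx (exp2S_addnn m, exp2S_addnn m)).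

Lemma divn_exp2D m (a : 'I_(2 ^ m)) : ((2 ^ m + a) %/ 2 ^ m = 1)%N.
Proof. by rewrite divnDl // divnn expn_gt0 divn_small. Qed.

Lemma GN_block m : GN m.+1 = castN m (block_mx (GN m) 0 (GN m) (GN m)).
Proof.
apply/esym/(canLR (castmxKV _ _)); apply/matrixP => i j.
rewrite -[i]splitK -[j]splitK; case: (split i) => a; case: (split j) => b.
all: rewrite castmxE /= ?(block_mxEul, block_mxEur, block_mxEdl, block_mxEdr).
all: rewrite !mxE /=.
all: by rewrite ?modnDl ?divn_exp2D !modn_small ?divn_small ?mul1r ?mul0r.
Qed.

Lemma Qpi_block m :
  Qpi (2 ^ m.+1) = castN m (block_mx 0 (Qpi (2 ^ m)) (Qpi (2 ^ m)) 0).
Proof.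
apply/esym/(canLR (castmxKV _ _)); apply/matrixP => i j.
rewrite -[i]splitK -[j]splitK; case: (split i) => a; case: (split j) => b.
all: rewrite castmxE /= ?(block_mxEul, block_mxEur, block_mxEdl, block_mxEdr).
all: rewrite !mxE /= !permE -?val_eqE /=.
all: move: (ltn_ord a) (ltn_ord b); rewrite -exp2S_addnn => lta ltb.
- by rewrite (_ : _ == _ = false) //; apply/eqP; lia.
- by congr (_ %:R); apply/eqP/eqP; lia.
- by congr (_ %:R); apply/eqP/eqP; lia.
- by rewrite (_ : _ == _ = false) //; apply/eqP; lia.
Qed.

Lemma GN0 : GN 0 = 1%:M.
Proof.
by apply/matrixP => i j; rewrite !mxE; case: i j => [[]//] ? [[]//].
Qed.

Lemma Qpi1 : Qpi 1 = 1%:M.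
Proof.
by apply/matrixP => i j; rewrite !mxE permE; case: i j => [[]//] ? [[]//].
Qed.

Lemma GN_involutive m : GN m *m GN m = 1%:M.
Proof.
elim: m => [|m IHm]; first by rewrite GN0 mulmx1.
rewrite GN_block mulmx_castmx mulmx_block IHm !mulmx0 !mul0mx !addr0 !add0r.
by rewrite addrr_F2 -scalar_mx_block castmx_scalar.
Qed.

Lemma trmx_GN m : (GN m)^T = GN m *m Qpi (2 ^ m) *m GN m.
Proof.
elim: m => [|m IHm]; first by rewrite GN0 Qpi1 trmx1 !mulmx1.
rewrite GN_block Qpi_block !mulmx_castmx trmx_cast tr_block_mx trmx0.
rewrite !mulmx_block.
by rewrite !mulmx0 !mul0mx !addr0 !add0r addrr_F2 mul0mx add0r -IHm.
Qed.

Lemma upper_unitri_unitmx n (P : 'M['F_2]_n) : upper_unitri P -> P \in unitmx.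
Proof.
case=> Plow Pdiag; rewrite unitmxE -det_tr det_trig.
  by rewrite big1 ?unitr1 // => i _; rewrite mxE Pdiag.
by apply/is_trig_mxP => i j ji; rewrite mxE Plow.
Qed.

Theorem theorem1 (m : nat) (A : {set 'I_(2 ^ m)}) (P : 'M['F_2]_(2 ^ m)) :
  (1 <= m)%N -> upper_unitri P ->
  dual (code (P *m GN m) A) =
  code (invmx P^T *m GN m *m Qpi (2 ^ m) *m GN m) (~: A).
Proof.
move=> _ /upper_unitri_unitmx unitP; apply: dual_code_biorth.
rewrite -!mulmxA (mulmxA (GN m)) -trmx_GN trmx_mul trmxK trmx_inv trmxK.
by rewrite (mulmxA (GN m)) GN_involutive mul1mx mulmxV.
Qed.
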